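(* In the VI setting below, let $u\in\mathbb{R}^n$ and $y=S(u)$. Then $$\partial_BS(u)=\{A(\mathcal A_s\cup\mathcal B_0)^{-1}\chi(\mathcal A_s\cup\mathcal B_0):\ \mathcal B_0\subseteq\mathcal B\},$$ where $\mathcal A_s=\mathcal A_s(u)$ and $\mathcal B=\mathcal B(u)$.
   Context: VI setting: $A\in\mathbb{R}^{n\times n}$ symmetric positive definite, $\|v\|_1=\sum_i|v_i|$. For $u\in\mathbb{R}^n$, $S(u)=y$ is the unique solution of $\langle Ay,v-y\rangle+\|v\|_1-\|y\|_1\ge\langle u,v-y\rangle$ for all $v\in\mathbb{R}^n$; equivalently there is $q\in\mathbb{R}^n$ with $Ay+q=u$, $y_iq_i=|y_i|$, $|q_i|\le1$, and then $q=u-Ay$. $S$ is globally Lipschitz and directionally differentiable. Index sets (depending on $u$ through $y,q$): $\mathcal A_s(u)=\{i:|q_i|<1\}$ (strongly active), $\mathcal I(u)=\{i:y_i\ne0\}$ (inactive), $\mathcal B(u)=\{i:y_i=0,\ |q_i|=1\}$ (biactive). For $\mathcal N\subseteq\{1,\dots,n\}$: $A(\mathcal N)_{ij}=A_{ij}$ if $i,j\notin\mathcal N$, $A(\mathcal N)_{ij}=0$ if $i\ne j$ and ($i\in\mathcal N$ or $j\in\mathcal N$), $A(\mathcal N)_{ii}=1$ if $i\in\mathcal N$; $\chi(\mathcal N)$ is the diagonal matrix with $\chi(\mathcal N)_{ii}=1$ for $i\notin\mathcal N$ and $0$ otherwise ($A(\mathcal N)$ is invertible). $\partial_BS(u)$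 is the Bouligand subdifferential: all limits $\lim_jS'(u_j)$ with $u_j\to u$ and $S$ differentiable at $u_j$. *)

(* classical reals R.  Vectors of R^n are functions nat -> R,
   matrices are functions nat -> nat -> R; only indices < n are meaningful. *)
From Stdlib Require Import Reals Lra Lia Arith ClassicalEpsilon.
Open Scope R_scope.

Definition vec := nat -> R.
Definition mat := nat -> nat -> R.

Fixpoint rsum (n : nat) (f : nat -> R) : R :=
  match n with O => 0 | S k => rsum k f + f k end.

Definition inner (n : nat) (x y : vec) : R := rsum n (fun i => x i * y i).
Definition norm1 (n : nat) (x : vec) : R := rsum n (fun i => Rabs (x i)).
Definition mv (n : nat) (M : mat) (x : vec) : vec := fun i => rsum n (fun j => M i j * x j).
Definition mmul (n : nat) (M N : mat) : mat := fun i k => rsum n (fun j => M i j * N j k).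
Definition vsub (x y : vec) : vec := fun i => x i - y i.
Definition vadd (x y : vec) : vec := fun i => x i + y i.
Definition idm : mat := fun i j => if Nat.eqb i j then 1 else 0.

Definition meq (n : nat) (M N : mat) : Prop :=
  forall i j, (i < n)%nat -> (j < n)%nat -> M i j = N i j.

Definition symmetric (n : nat) (A : mat) : Prop :=
  forall i j, (i < n)%nat -> (j < n)%nat -> A i j = A j i.
Definition pos_def (n : nat) (A : mat) : Prop :=
  forall x : vec, (exists i, (i < n)%nat /\ x i <> 0) -> 0 < inner n x (mv n A x).
Definition spd (n : nat) (A : mat) : Prop := symmetric n A /\ pos_def n A.

Definition is_S (n : nat) (A : mat) (u y : vec) : Prop :=
  forall v : vec,
    inner n (mv n A y) (vsub v y) + norm1 n v - norm1 n y >= inner n u (vsub v y).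

(* the solution operator S (the solution exists and is unique on indices < n) *)
Definition Ssol (n : nat) (A : mat) (u : vec) : vec :=
  epsilon (inhabits (fun _ : nat => 0)) (fun y => is_S n A u y).

Definition minv (n : nat) (M : mat) : mat :=
  epsilon (inhabits (fun _ _ : nat => 0))
    (fun X => meq n (mmul n M X) idm /\ meq n (mmul n X M) idm).

Definition has_deriv (n : nat) (f : vec -> vec) (x : vec) (J : mat) : Prop :=
  forall eps, 0 < eps -> exists delta, 0 < delta /\
    forall h : vec, norm1 n h < delta ->
      norm1 n (vsub (vsub (f (vadd x h)) (f x)) (mv n J h)) <= eps * norm1 n h.

Definition vseq_cv (n : nat) (w : nat -> vec) (u : vec) : Prop :=
  forall eps, 0 < eps -> exists N, forall k, (N <= k)%nat -> norm1 n (vsub (w k) u) < eps.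

Definition mseq_cv (n : nat) (J : nat -> mat) (M : mat) : Prop :=
  forall i j, (i < n)%nat -> (j < n)%nat -> Un_cv (fun k => J k i j) (M i j).

Definition bouligand (n : nat) (A : mat) (u : vec) (M : mat) : Prop :=
  exists (w : nat -> vec) (J : nat -> mat),
    vseq_cv n w u /\ (forall k, has_deriv n (Ssol n A) (w k) (J k)) /\ mseq_cv n J M.

Definition qvec (n : nat) (A : mat) (u : vec) : vec := vsub u (mv n A (Ssol n A u)).
Definition strongly_active (n : nat) (A : mat) (u : vec) (i : nat) : bool :=
  if Rlt_dec (Rabs (qvec n A u i)) 1 then true else false.
Definition inactive (n : nat) (A : mat) (u : vec) (i : nat) : bool :=
  if Req_EM_T (Ssol n A u i) 0 then false else true.
Definition biactive (n : nat) (A : mat) (u : vec) (i : nat) : bool :=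
  if Req_EM_T (Ssol n A u i) 0 then
    (if Req_EM_T (Rabs (qvec n A u i)) 1 then true else false)
  else false.

Definition A_of (A : mat) (N : nat -> bool) : mat :=
  fun i j => if orb (N i) (N j) then (if Nat.eqb i j then 1 else 0) else A i j.
Definition chi (N : nat -> bool) : mat :=
  fun i j => if Nat.eqb i j then (if N i then 0 else 1) else 0.

(* With q = u - A S(u), the pair (S(u), q) solves the KKT system A y + q = u,
   q_i in the subdifferential of |.| at y_i, and S is Lipschitz.  Along a coordinate
   line through a point w where S is differentiable with Jacobian J, the i-th
   coordinates of S and q are differentiable scalar functions with |q_i| <= 1 and
   y_i q_i = |y_i|.  This forces J_i = 0 where |q_i| < 1 and (A J)_i = e_i where
   y_i <> 0, and both at a biactive index; the latter is impossible, since the i-th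
   column z of J would then satisfy z_k (A z)_k = 0 for all k.  These row conditions
   pass to limits, and they characterise A(N)^-1 chi(N); B_0 collects the biactive
   rows of the limit that vanish.  Conversely, moving u along a line that makes the
   indices of B_0 strongly active and the other biactive indices inactive gives
   points without biactive indices, where S is locally affine with derivative
   A(N)^-1 chi(N). *)

From Stdlib Require Import Reals Lra Lia ClassicalEpsilon Classical Bool FunctionalExtensionality.
Open Scope R_scope.

(** * Finite sums, vectors and matrices *)

Lemma rsum_ext n f g : (forall i, (i < n)%nat -> f i = g i) -> rsum n f = rsum n g.
Proof.
  induction n as [|n IH]; intros H; simpl; auto.
  rewrite H by lia. f_equal. apply IH. intros; apply H; lia.
Qed.

Lemma rsum_plus n f g : rsum n (fun i => f i + g i) = rsum n f + rsum n g.
Proof. induction n; simpl; [lra|]. rewrite IHn; lra. Qed.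

Lemma rsum_minus n f g : rsum n (fun i => f i - g i) = rsum n f - rsum n g.
Proof. induction n; simpl; [lra|]. rewrite IHn; lra. Qed.

Lemma rsum_scal_l n c f : rsum n (fun i => c * f i) = c * rsum n f.
Proof. induction n; simpl; [lra|]. rewrite IHn; lra. Qed.

Lemma rsum_scal_r n c f : rsum n (fun i => f i * c) = rsum n f * c.
Proof. induction n; simpl; [lra|]. rewrite IHn; lra. Qed.

Lemma rsum_zero n f : (forall i, (i < n)%nat -> f i = 0) -> rsum n f = 0.
Proof.
  induction n as [|n IH]; intros H; simpl; auto.
  rewrite IH, H; [lra|lia|]. intros; apply H; lia.
Qed.

Lemma rsum_le n f g : (forall i, (i < n)%nat -> f i <= g i) -> rsum n f <= rsum n g.
Proof.
  induction n as [|n IH]; intros H; simpl; [lra|].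
  apply Rplus_le_compat; [apply IH; intros; apply H|apply H]; lia.
Qed.

Lemma rsum_nonneg n f : (forall i, (i < n)%nat -> 0 <= f i) -> 0 <= rsum n f.
Proof.
  intros H. rewrite <- (rsum_zero n (fun _ => 0)) by auto. now apply rsum_le.
Qed.

Lemma rsum_abs n f : Rabs (rsum n f) <= rsum n (fun i => Rabs (f i)).
Proof.
  induction n; simpl; [rewrite Rabs_R0; lra|].
  eapply Rle_trans; [apply Rabs_triang|lra].
Qed.

Lemma rsum_swap n m f :
  rsum n (fun i => rsum m (fun j => f i j)) = rsum m (fun j => rsum n (fun i => f i j)).
Proof.
  induction n; simpl; [symmetry; now apply rsum_zero|].
  now rewrite IHn, <- rsum_plus.
Qed.

Lemma rsum_term_le n f i :
  (forall j, (j < n)%nat -> 0 <= f j) -> (i < n)%nat -> f i <= rsum n f.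
Proof.
  induction n as [|n IH]; intros H Hi; simpl; [lia|].
  assert (0 <= rsum n f) by (apply rsum_nonneg; intros; apply H; lia).
  destruct (Nat.eq_dec i n) as [->|Hne]; [lra|].
  assert (f i <= rsum n f) by (apply IH; [intros; apply H|]; lia).
  assert (0 <= f n) by (apply H; lia). lra.
Qed.

Lemma rsum_delta n f j :
  (j < n)%nat -> rsum n (fun l => if Nat.eqb l j then f l else 0) = f j.
Proof.
  induction n as [|n IH]; intros Hj; simpl; [lia|].
  destruct (Nat.eq_dec j n) as [->|Hne].
  - rewrite Nat.eqb_refl, rsum_zero; [lra|].
    intros i Hi. destruct (Nat.eqb_spec i n); [lia|auto].
  - rewrite IH by lia. destruct (Nat.eqb_spec n j); [lia|lra].
Qed.

Lemma rsum_update n f g i : (i < n)%nat ->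
  (forall j, (j < n)%nat -> j <> i -> f j = g j) -> rsum n g = rsum n f + (g i - f i).
Proof.
  intros Hi H. rewrite <- (rsum_delta n (fun l => g l - f l) i Hi), <- rsum_plus.
  apply rsum_ext. intros j Hj. destruct (Nat.eqb_spec j i) as [->|Hne]; [ring|].
  rewrite H by auto. ring.
Qed.

Lemma Un_cv_const a : Un_cv (fun _ => a) a.
Proof. intros e He. exists 0%nat. intros. unfold R_dist. rewrite Rminus_diag, Rabs_R0; auto. Qed.

Lemma rsum_cv n (f : nat -> nat -> R) (l : nat -> R) :
  (forall i, (i < n)%nat -> Un_cv (fun k => f k i) (l i)) ->
  Un_cv (fun k => rsum n (f k)) (rsum n l).
Proof.
  induction n as [|n IH]; intros H; simpl.
  - apply Un_cv_const.
  - apply CV_plus; [apply IH; intros|]; apply H; lia.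
Qed.

Lemma finite_min n (f : nat -> R) : (forall i, (i < n)%nat -> 0 < f i) ->
  exists m, 0 < m /\ forall i, (i < n)%nat -> m <= f i.
Proof.
  induction n as [|n IH]; intros H; [exists 1; split; [lra|intros; lia]|].
  destruct IH as [m [Hm Hm2]]; [intros; apply H; lia|].
  exists (Rmin m (f n)). split; [apply Rmin_glb_lt; auto; apply H; lia|].
  intros i Hi. destruct (Nat.eq_dec i n) as [->|]; [apply Rmin_r|].
  eapply Rle_trans; [apply Rmin_l|apply Hm2; lia].
Qed.

Lemma finite_max n (f : nat -> R) : exists C, 0 < C /\ forall i, (i < n)%nat -> f i <= C.
Proof.
  induction n as [|n IH]; [exists 1; split; [lra|intros; lia]|].
  destruct IH as [m [Hm Hm2]].
  exists (Rmax m (f n)). split; [eapply Rlt_le_trans; [apply Hm|apply Rmax_l]|].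
  intros i Hi. destruct (Nat.eq_dec i n) as [->|]; [apply Rmax_r|].
  eapply Rle_trans; [apply Hm2; lia|apply Rmax_l].
Qed.

Definition basisv (j : nat) (t : R) : vec := fun l => if Nat.eqb l j then t else 0.

Lemma basisv_idm j t i : basisv j t i = t * idm i j.
Proof. unfold basisv, idm. destruct (Nat.eqb i j); ring. Qed.

Lemma mv_ext n P x y i : (forall j, (j < n)%nat -> x j = y j) -> mv n P x i = mv n P y i.
Proof. intros H; unfold mv; apply rsum_ext; intros; rewrite H; auto. Qed.

Lemma mv_plus n P x y i : mv n P (vadd x y) i = mv n P x i + mv n P y i.
Proof. unfold mv, vadd. rewrite <- rsum_plus. apply rsum_ext; intros; ring. Qed.

Lemma mv_minus n P x y i : mv n P (vsub x y) i = mv n P x i - mv n P y i.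
Proof. unfold mv, vsub. rewrite <- rsum_minus. apply rsum_ext; intros; ring. Qed.

Lemma mv_scal n P c x i : mv n P (fun l => c * x l) i = c * mv n P x i.
Proof. unfold mv. rewrite <- rsum_scal_l. apply rsum_ext; intros; ring. Qed.

Lemma mv_mv n P Q x i : mv n P (mv n Q x) i = mv n (mmul n P Q) x i.
Proof.
  unfold mv, mmul.
  transitivity (rsum n (fun k => rsum n (fun j => P i k * Q k j * x j))).
  - apply rsum_ext; intros. rewrite <- rsum_scal_l. apply rsum_ext; intros; ring.
  - rewrite rsum_swap. apply rsum_ext; intros. now rewrite <- rsum_scal_r.
Qed.

Lemma mmul_assoc n P Q T i j : mmul n (mmul n P Q) T i j = mmul n P (mmul n Q T) i j.
Proof.
  unfold mmul.
  transitivity (rsum n (fun k => rsum n (fun l => P i l * Q l k * T k j))).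
  - apply rsum_ext; intros. now rewrite <- rsum_scal_r.
  - rewrite rsum_swap. apply rsum_ext; intros. rewrite <- rsum_scal_l.
    apply rsum_ext; intros; ring.
Qed.

Lemma mv_basisv n P j t i : (j < n)%nat -> mv n P (basisv j t) i = t * P i j.
Proof.
  intros Hj. unfold mv, basisv.
  rewrite (rsum_ext n _ (fun l => if Nat.eqb l j then P i l * t else 0)).
  - rewrite rsum_delta; auto; ring.
  - intros l _. destruct (Nat.eqb l j); ring.
Qed.

Lemma mmul_idm_r n P i j : (j < n)%nat -> mmul n P idm i j = P i j.
Proof.
  intros Hj. unfold mmul, idm.
  rewrite (rsum_ext n _ (fun k => if Nat.eqb k j then P i k else 0)).
  - apply (rsum_delta n (fun k => P i k) j Hj).
  - intros k _. destruct (Nat.eqb k j); ring.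
Qed.

Lemma mmul_idm_l n P i j : (i < n)%nat -> mmul n idm P i j = P i j.
Proof.
  intros Hi. unfold mmul, idm.
  rewrite (rsum_ext n _ (fun k => if Nat.eqb k i then P k j else 0)).
  - apply (rsum_delta n (fun k => P k j) i Hi).
  - intros k _. rewrite Nat.eqb_sym. destruct (Nat.eqb k i); ring.
Qed.

Lemma mmul_idm_row n P Q i j : (i < n)%nat ->
  (forall k, (k < n)%nat -> P i k = idm i k) -> mmul n P Q i j = Q i j.
Proof.
  intros Hi H. rewrite <- (mmul_idm_l n Q i j Hi). apply rsum_ext. intros k Hk. now rewrite H.
Qed.

Lemma norm1_nonneg n x : 0 <= norm1 n x.
Proof. unfold norm1; apply rsum_nonneg; intros; apply Rabs_pos. Qed.

Lemma norm1_basisv n j t : (j < n)%nat -> norm1 n (basisv j t) = Rabs t.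
Proof.
  intros Hj. unfold norm1, basisv.
  rewrite (rsum_ext n _ (fun l => if Nat.eqb l j then Rabs t else 0)).
  - apply rsum_delta; auto.
  - intros l _. destruct (Nat.eqb l j); auto. apply Rabs_R0.
Qed.

Lemma Rabs_coord_le_norm1 n x i : (i < n)%nat -> Rabs (x i) <= norm1 n x.
Proof.
  intros Hi. apply (rsum_term_le n (fun i => Rabs (x i))); auto. intros; apply Rabs_pos.
Qed.

Lemma Rabs_mv_le n P h i : Rabs (mv n P h i) <= rsum n (fun j => Rabs (P i j)) * norm1 n h.
Proof.
  unfold mv. eapply Rle_trans; [apply rsum_abs|].
  unfold norm1. rewrite <- rsum_scal_l.
  apply rsum_le. intros j Hj. rewrite Rabs_mult.
  apply Rmult_le_compat_r; [apply Rabs_pos|].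
  apply (rsum_term_le n (fun j => Rabs (P i j))); auto. intros; apply Rabs_pos.
Qed.

Lemma inner_nonneg n x : 0 <= inner n x x.
Proof. unfold inner. apply rsum_nonneg; intros. apply Rle_0_sqr. Qed.

Lemma sqr_coord_le_inner n x i : (i < n)%nat -> x i * x i <= inner n x x.
Proof.
  intros Hi. apply (rsum_term_le n (fun i => x i * x i)); auto. intros; apply Rle_0_sqr.
Qed.

Lemma inner_le_norm1_sqr n x : inner n x x <= norm1 n x * norm1 n x.
Proof.
  unfold inner, norm1. induction n; simpl; [lra|].
  assert (0 <= rsum n (fun i => Rabs (x i))) by (apply rsum_nonneg; intros; apply Rabs_pos).
  assert (x n * x n = Rabs (x n) * Rabs (x n))
    by (rewrite <- Rabs_mult; symmetry; apply Rabs_right, Rle_ge, Rle_0_sqr).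
  pose proof (Rabs_pos (x n)). nra.
Qed.

Lemma cauchy_schwarz n a b : inner n a b * inner n a b <= inner n a a * inner n b b.
Proof.
  set (X := inner n a a). set (Y := inner n b b). set (Z := inner n a b).
  assert (Hq : forall t, 0 <= X * (t * t) + 2 * Z * t + Y).
  { intros t. pose proof (inner_nonneg n (fun i => a i * t + b i)) as H.
    unfold inner in H.
    rewrite (rsum_ext n _ (fun i => a i * a i * (t * t) + (2 * t) * (a i * b i) + b i * b i)),
      !rsum_plus, rsum_scal_r, rsum_scal_l in H by (intros; ring).
    unfold X, Y, Z, inner. lra. }
  assert (HX : 0 <= X) by apply inner_nonneg.
  destruct (Req_dec X 0) as [H0|H0].
  - destruct (Req_dec Z 0) as [HZ|HZ]; [rewrite HZ, H0; lra|].
    specialize (Hq (- (Y + 1) / (2 * Z))). rewrite H0 in Hq.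
    replace (0 * (- (Y + 1) / (2 * Z) * (- (Y + 1) / (2 * Z))) + 2 * Z * (- (Y + 1) / (2 * Z)) + Y)
      with (-1) in Hq by (field; auto). lra.
  - specialize (Hq (- Z / X)).
    replace (X * (- Z / X * (- Z / X)) + 2 * Z * (- Z / X) + Y) with ((X * Y - Z * Z) / X) in Hq
      by (field; auto).
    assert (0 <= X * Y - Z * Z); [|lra].
    apply Rmult_le_reg_r with (/ X); [apply Rinv_0_lt_compat; lra|]. lra.
Qed.

(** * Coercivity of positive definite matrices *)

Lemma pos_def_diag n A j : pos_def n A -> (j < n)%nat -> 0 < A j j.
Proof.
  intros Hp Hj.
  replace (A j j) with (inner n (basisv j 1) (mv n A (basisv j 1))).
  - apply Hp. exists j. split; auto. unfold basisv. rewrite Nat.eqb_refl. lra.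
  - unfold inner. rewrite (rsum_ext n _ (fun i => if Nat.eqb i j then A i j else 0)).
    + apply (rsum_delta n (fun i => A i j) j Hj).
    + intros i Hi. rewrite mv_basisv by auto. unfold basisv. destruct (Nat.eqb i j); ring.
Qed.

Definition schur (n : nat) (A : mat) : mat := fun i j => A i j - A i n * A n j / A n n.

Lemma schur_quad n A x : symmetric (S n) A -> A n n <> 0 ->
  inner (S n) x (mv (S n) A x) =
  inner n x (mv n (schur n A) x) + A n n * (x n + inner n (A n) x / A n n) ^ 2.
Proof.
  intros Hs Ha. unfold inner, mv, schur. simpl.
  set (P := rsum n (fun j => A n j * x j)).
  set (Q := rsum n (fun i => x i * rsum n (fun j => A i j * x j))).
  assert (HP : rsum n (fun i => x i * A i n) = P).
  { apply rsum_ext. intros i Hi. rewrite (Hs i n) by lia. ring. }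
  assert (E1 : rsum n (fun i => x i * (rsum n (fun j => A i j * x j) + A i n * x n))
               = Q + x n * P).
  { rewrite (rsum_ext n _ (fun i => x i * rsum n (fun j => A i j * x j) + x n * (x i * A i n)))
      by (intros; ring).
    now rewrite rsum_plus, rsum_scal_l, HP. }
  assert (E2 : rsum n (fun i => x i * rsum n (fun j => (A i j - A i n * A n j / A n n) * x j))
               = Q - P * (P / A n n)).
  { rewrite (rsum_ext n _ (fun i => x i * rsum n (fun j => A i j * x j)
                                   - (x i * A i n) * (P / A n n))).
    - now rewrite rsum_minus, rsum_scal_r, HP.
    - intros i Hi. rewrite (rsum_ext n _ (fun j => A i j * x j - (A i n / A n n) * (A n j * x j)))
        by (intros; field; auto).
      rewrite rsum_minus, rsum_scal_l. fold P. field; auto. }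
  rewrite E1, E2. fold P. field; auto.
Qed.

Lemma schur_spd n A : spd (S n) A -> spd n (schur n A).
Proof.
  intros [Hs Hp]. pose proof (pos_def_diag (S n) A n Hp (Nat.lt_succ_diag_r n)) as Ha. split.
  - intros i j Hi Hj. unfold schur. rewrite (Hs i j), (Hs i n), (Hs n j) by lia. field. lra.
  - intros x [i [Hi Hx]].
    set (x' := fun k => if Nat.eqb k n then - (inner n (A n) x / A n n) else x k).
    assert (Ex : forall k, (k < n)%nat -> x' k = x k).
    { intros k Hk. unfold x'. destruct (Nat.eqb_spec k n); [lia|auto]. }
    assert (Hpos : 0 < inner (S n) x' (mv (S n) A x')).
    { apply Hp. exists i. split; [lia|]. now rewrite Ex. }
    rewrite schur_quad in Hpos by (auto; lra).
    replace (inner n x' (mv n (schur n A) x')) with (inner n x (mv n (schur n A) x)) in Hpos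
      by (unfold inner; apply rsum_ext; intros k Hk; rewrite Ex by auto;
          f_equal; apply mv_ext; intros; now rewrite Ex).
    replace (inner n (A n) x') with (inner n (A n) x) in Hpos
      by (unfold inner; apply rsum_ext; intros k Hk; now rewrite Ex).
    unfold x' in Hpos. rewrite Nat.eqb_refl in Hpos.
    replace (- (inner n (A n) x / A n n) + inner n (A n) x / A n n) with 0 in Hpos by ring.
    rewrite pow_i in Hpos by lia. lra.
Qed.

Lemma spd_coercive n A : spd n A ->
  exists c, 0 < c /\ forall x, c * inner n x x <= inner n x (mv n A x).
Proof.
  revert A. induction n as [|n IH]; intros A HA.
  { exists 1. split; [lra|]. intros x. unfold inner. simpl. lra. }
  destruct HA as [Hs Hp]. set (a := A n n).
  assert (Ha : 0 < a) by (apply (pos_def_diag (S n)); auto).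
  destruct (IH _ (schur_spd n A (conj Hs Hp))) as [c' [Hc' Hcoer]].
  set (L := inner n (A n) (A n) / (a * a)).
  assert (HL : 0 <= L)
    by (apply Rmult_le_pos; [apply inner_nonneg|apply Rlt_le, Rinv_0_lt_compat; nra]).
  set (c := Rmin (c' / (1 + 2 * L)) (a / 2)).
  assert (Hc : 0 < c) by (apply Rmin_glb_lt; [apply Rdiv_lt_0_compat|]; lra).
  exists c. split; auto. intros x.
  rewrite schur_quad by (auto; fold a; lra). fold a.
  set (X := inner n x x). set (b := inner n (A n) x / a).
  assert (HX : 0 <= X) by apply inner_nonneg.
  assert (Hb : b * b <= L * X).
  { unfold b, L, X. pose proof (cauchy_schwarz n (A n) x).
    replace (inner n (A n) x / a * (inner n (A n) x / a))
      with (inner n (A n) x * inner n (A n) x / (a * a)) by (field; lra).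
    replace (inner n (A n) (A n) / (a * a) * inner n x x)
      with (inner n (A n) (A n) * inner n x x / (a * a)) by (field; lra).
    apply Rmult_le_compat_r; [apply Rlt_le, Rinv_0_lt_compat; nra|auto]. }
  replace (inner (S n) x x) with (X + x n * x n) by (unfold inner, X; simpl; auto).
  pose proof (Hcoer x) as Hq. fold X in Hq.
  assert (Hc1 : c * (1 + 2 * L) <= c').
  { unfold c. apply Rle_trans with (c' / (1 + 2 * L) * (1 + 2 * L)).
    - apply Rmult_le_compat_r; [lra|apply Rmin_l].
    - right. field. lra. }
  assert (Hc2 : c <= a / 2) by apply Rmin_r.
  assert (x n * x n <= 2 * (x n + b) ^ 2 + 2 * (b * b))
    by (pose proof (pow2_ge_0 (x n + 2 * b)); nra).
  assert (c * (X + x n * x n) <= c * (1 + 2 * L) * X + 2 * c * (x n + b) ^ 2) by nra.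
  assert (c * (1 + 2 * L) * X <= c' * X) by (apply Rmult_le_compat_r; lra).
  assert (2 * c * (x n + b) ^ 2 <= a * (x n + b) ^ 2)
    by (apply Rmult_le_compat_r; [apply pow2_ge_0|lra]).
  lra.
Qed.

(** * Contractions *)

Lemma geometric_cauchy (Y : nat -> R) s E :
  0 <= s < 1 -> 0 <= E -> (forall k, Rabs (Y (S k) - Y k) <= E * s ^ k) -> Cauchy_crit Y.
Proof.
  intros Hs HE H.
  assert (Hm : forall k m, Rabs (Y (k + m)%nat - Y k) <= E * (s ^ k - s ^ (k + m)) / (1 - s)).
  { intros k m. induction m.
    - rewrite Nat.add_0_r, Rminus_diag, Rabs_R0, Rminus_diag. unfold Rdiv. lra.
    - replace (k + S m)%nat with (S (k + m)) by lia.
      replace (Y (S (k + m)) - Y k) with ((Y (S (k + m)) - Y (k + m)%nat) + (Y (k + m)%nat - Y k))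
        by ring.
      eapply Rle_trans; [apply Rabs_triang|].
      replace (E * (s ^ k - s ^ S (k + m)) / (1 - s))
        with (E * s ^ (k + m) + E * (s ^ k - s ^ (k + m)) / (1 - s)) by (simpl; field; lra).
      pose proof (H (k + m)%nat). lra. }
  assert (Hm2 : forall k m, (k <= m)%nat -> Rabs (Y m - Y k) <= E * s ^ k / (1 - s)).
  { intros k m Hkm. replace m with (k + (m - k))%nat by lia.
    eapply Rle_trans; [apply Hm|].
    apply Rmult_le_compat_r; [apply Rlt_le, Rinv_0_lt_compat; lra|].
    apply Rmult_le_compat_l; auto. pose proof (pow_le s (k + (m - k)) (proj1 Hs)). lra. }
  intros eps Heps.
  destruct (pow_lt_1_zero s (ltac:(rewrite Rabs_right; lra)) (eps * (1 - s) / (2 * (E + 1))))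
    as [N HN]; [apply Rdiv_lt_0_compat; [apply Rmult_lt_0_compat|]; lra|].
  exists N. intros a b Ha Hb. unfold R_dist.
  specialize (HN N (Nat.le_refl N)). rewrite Rabs_right in HN by (apply Rle_ge, pow_le; lra).
  replace (Y a - Y b) with ((Y a - Y N) - (Y b - Y N)) by ring.
  eapply Rle_lt_trans; [apply Rabs_triang|]. rewrite Rabs_Ropp.
  pose proof (Hm2 N a Ha). pose proof (Hm2 N b Hb).
  assert (E * s ^ N / (1 - s) < eps / 2); [|lra].
  apply Rmult_lt_reg_r with (1 - s); [lra|].
  replace (E * s ^ N / (1 - s) * (1 - s)) with (E * s ^ N) by (field; lra).
  pose proof (pow_le s N (proj1 Hs)).
  assert (Hlt : (E + 1) * s ^ N < (E + 1) * (eps * (1 - s) / (2 * (E + 1))))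
    by (apply Rmult_lt_compat_l; lra).
  replace ((E + 1) * (eps * (1 - s) / (2 * (E + 1)))) with (eps / 2 * (1 - s)) in Hlt
    by (field; lra).
  nra.
Qed.

Lemma Un_cv_of_sqr_le (x b : nat -> R) l :
  Un_cv b 0 -> (forall k, (x k - l) * (x k - l) <= b k) -> Un_cv x l.
Proof.
  intros Hb H e He. destruct (Hb (e * e)) as [N HN]; [nra|].
  exists N. intros k Hk. specialize (HN k Hk). specialize (H k). unfold R_dist in *.
  rewrite Rminus_0_r in HN. pose proof (Rle_abs (b k)).
  rewrite <- (Rabs_right e) by lra. apply Rsqr_lt_abs_0. unfold Rsqr. lra.
Qed.

Lemma inner_vsub_cv n (Y : nat -> vec) (y : vec) :
  (forall i, (i < n)%nat -> Un_cv (fun k => Y k i) (y i)) ->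
  Un_cv (fun k => inner n (vsub (Y k) y) (vsub (Y k) y)) 0.
Proof.
  intros H. rewrite <- (rsum_zero n (fun _ => 0)) by auto. apply rsum_cv. intros i Hi.
  replace 0 with ((y i - y i) * (y i - y i)) by ring.
  apply CV_mult; apply CV_minus; auto; apply Un_cv_const.
Qed.

Section Contraction.

Variables (n : nat) (T : vec -> vec) (r : R).
Hypothesis r_range : 0 <= r < 1.
Hypothesis T_contraction : forall y z,
  inner n (vsub (T y) (T z)) (vsub (T y) (T z)) <= r * inner n (vsub y z) (vsub y z).

Let Y (k : nat) : vec := Nat.iter k T (fun _ => 0).

Lemma iterates_step_bound : exists s E, 0 <= s < 1 /\ 0 <= E /\
  forall i k, (i < n)%nat -> Rabs (Y (S k) i - Y k i) <= E * s ^ k.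
Proof.
  set (D0 := inner n (vsub (Y 1%nat) (Y 0%nat)) (vsub (Y 1%nat) (Y 0%nat))).
  assert (HD0 : 0 <= D0) by apply inner_nonneg.
  assert (HD : forall k, inner n (vsub (Y (S k)) (Y k)) (vsub (Y (S k)) (Y k)) <= r ^ k * D0).
  { induction k; [rewrite pow_O; unfold D0; lra|].
    eapply Rle_trans; [apply (T_contraction (Y (S k)) (Y k))|].
    replace (r ^ S k * D0) with (r * (r ^ k * D0)) by (simpl; ring).
    apply Rmult_le_compat_l; lra. }
  set (s := (1 + r) / 2). exists s, (D0 + 1).
  split; [unfold s; lra|]. split; [lra|]. intros i k Hi.
  assert (Hsk : 0 <= s ^ k) by (apply pow_le; unfold s; lra).
  assert (r ^ k <= s ^ k * s ^ k).
  { rewrite <- Rpow_mult_distr. apply pow_incr. unfold s. nra. }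
  assert (Hsq : (Y (S k) i - Y k i) * (Y (S k) i - Y k i) <= (D0 + 1) * s ^ k * ((D0 + 1) * s ^ k)).
  { pose proof (sqr_coord_le_inner n (vsub (Y (S k)) (Y k)) i Hi). unfold vsub at 1 2 in H0.
    pose proof (HD k). nra. }
  apply Rsqr_le_abs_0 in Hsq. rewrite (Rabs_right ((D0 + 1) * s ^ k)) in Hsq by nra. auto.
Qed.

Lemma contraction_fixed_point : exists y, forall i, (i < n)%nat -> T y i = y i.
Proof.
  destruct iterates_step_bound as [s [E [Hs [HE Hstep]]]].
  set (y := fun i => epsilon (inhabits 0) (fun l => Un_cv (fun k => Y k i) l)).
  assert (Hy : forall i, (i < n)%nat -> Un_cv (fun k => Y k i) (y i)).
  { intros i Hi. unfold y. apply epsilon_spec.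
    destruct (R_complete (fun k => Y k i)) as [l Hl]; [|now exists l].
    apply (geometric_cauchy _ s E Hs HE). intros; apply Hstep; auto. }
  exists y. intros i Hi. apply (UL_sequence (fun k => Y (S k) i)).
  - apply (Un_cv_of_sqr_le _ (fun k => inner n (vsub (Y k) y) (vsub (Y k) y))).
    + now apply inner_vsub_cv.
    + intros k. pose proof (sqr_coord_le_inner n (vsub (T (Y k)) (T y)) i Hi).
      pose proof (T_contraction (Y k) y). pose proof (inner_nonneg n (vsub (Y k) y)).
      unfold vsub at 1 2 in H. simpl. nra.
  - intros e He. destruct (Hy i Hi e He) as [N HN]. exists N. intros k Hk. apply HN. lia.
Qed.

End Contraction.

Lemma inner_mv_le n A d :
  inner n (mv n A d) (mv n A d) <= rsum n (fun i => inner n (A i) (A i)) * inner n d d.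
Proof.
  unfold inner at 1. rewrite <- rsum_scal_r. apply rsum_le. intros i Hi.
  apply (cauchy_schwarz n (A i) d).
Qed.

(* With c the coercivity constant and L bounding the squared Frobenius norm of A,
   y |-> y - (c / L) (A y - u) contracts the Euclidean norm by sqrt (1 - c^2 / L);
   composing coordinatewise with 1-Lipschitz maps preserves this. *)
Lemma projected_gradient_fixed_point n A : spd n A -> exists tau, 0 < tau /\
  forall (u : vec) (p : nat -> R -> R), (forall i a b, Rabs (p i a - p i b) <= Rabs (a - b)) ->
  exists y : vec, forall i, (i < n)%nat -> y i = p i (y i - tau * (mv n A y i - u i)).
Proof.
  intros hA. destruct (spd_coercive n A hA) as [c [Hc Hcoer]].
  set (L := rsum n (fun i => inner n (A i) (A i)) + 1).
  assert (HL : 1 <= L) by (assert (0 <= rsum n (fun i => inner n (A i) (A i)))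
    by (apply rsum_nonneg; intros; apply inner_nonneg); unfold L; lra).
  set (tau := c / L). assert (Htau : 0 < tau) by (apply Rdiv_lt_0_compat; lra).
  exists tau. split; auto. intros u p Hp.
  set (T := fun (y : vec) i => p i (y i - tau * (mv n A y i - u i))).
  set (r := Rmax 0 (1 - c * c / L)).
  destruct (contraction_fixed_point n T r) as [y Hy].
  - split; [apply Rmax_l|]. apply Rmax_lub_lt; [lra|].
    assert (0 < c * c / L) by (apply Rdiv_lt_0_compat; nra). lra.
  - intros y z. set (d := vsub y z).
    apply Rle_trans
      with (inner n (fun i => d i - tau * mv n A d i) (fun i => d i - tau * mv n A d i)).
    + apply rsum_le. intros i Hi. unfold vsub, T.
      pose proof (Hp i (y i - tau * (mv n A y i - u i)) (z i - tau * (mv n A z i - u i))) as H1.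
      replace (y i - tau * (mv n A y i - u i) - (z i - tau * (mv n A z i - u i)))
        with (d i - tau * mv n A d i) in H1 by (unfold d; rewrite mv_minus; unfold vsub; ring).
      apply Rsqr_le_abs_1 in H1. apply H1.
    + set (X := inner n d d).
      replace (inner n (fun i => d i - tau * mv n A d i) (fun i => d i - tau * mv n A d i))
        with (X - 2 * tau * inner n d (mv n A d) + tau * tau * inner n (mv n A d) (mv n A d))
        by (unfold X, inner; rewrite <- !rsum_scal_l, <- rsum_minus, <- rsum_plus;
            apply rsum_ext; intros; ring).
      pose proof (Hcoer d). pose proof (inner_mv_le n A d). fold X in H, H0.
      assert (HX : 0 <= X) by apply inner_nonneg.
      assert (inner n (mv n A d) (mv n A d) <= L * X) by (unfold L; nra).
      assert (X - 2 * tau * (c * X) + tau * tau * (L * X) = (1 - c * c / L) * X)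
        by (unfold tau; field; lra).
      assert ((1 - c * c / L) * X <= r * X) by (apply Rmult_le_compat_r; [auto|apply Rmax_r]).
      assert (tau * tau * inner n (mv n A d) (mv n A d) <= tau * tau * (L * X))
        by (apply Rmult_le_compat_l; nra).
      assert (tau * (c * X) <= tau * inner n d (mv n A d)) by (apply Rmult_le_compat_l; lra).
      lra.
  - exists y. intros i Hi. now rewrite <- (Hy i Hi) at 1.
Qed.

(** * The KKT system *)

Definition subgrad_abs (q y : R) : Prop := Rabs q <= 1 /\ y * q = Rabs y.

Definition kkt (n : nat) (A : mat) (u y : vec) : Prop :=
  forall i, (i < n)%nat -> subgrad_abs (u i - mv n A y i) (y i).

Lemma subgrad_abs_iff q y : subgrad_abs q y <-> forall v, q * (v - y) <= Rabs v - Rabs y.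
Proof.
  split.
  - intros [Hq Hy] v. pose proof (Rle_abs (q * v)). rewrite Rabs_mult in H.
    pose proof (Rabs_pos v). nra.
  - intros H. pose proof (H (y + 1)). pose proof (H (y - 1)). pose proof (H 0).
    rewrite Rabs_R0 in H2.
    assert (Rabs (y + 1) <= Rabs y + 1) by (unfold Rabs; repeat destruct Rcase_abs; lra).
    assert (Rabs (y - 1) <= Rabs y + 1) by (unfold Rabs; repeat destruct Rcase_abs; lra).
    assert (Hq : Rabs q <= 1) by (apply Rabs_le; nra).
    split; auto. pose proof (Rle_abs (y * q)). rewrite Rabs_mult in H5.
    pose proof (Rabs_pos y). nra.
Qed.

Lemma subgrad_abs_zero q y : subgrad_abs q y -> Rabs q < 1 -> y = 0.
Proof.
  intros [H1 H2] H3. apply NNPP. intros Hy. pose proof (Rabs_pos_lt y Hy).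
  pose proof (Rle_abs (y * q)). rewrite Rabs_mult in H0. nra.
Qed.

Lemma subgrad_abs_sign q y : subgrad_abs q y -> y <> 0 -> (0 < y /\ q = 1) \/ (y < 0 /\ q = -1).
Proof.
  intros [H2 H1] H3. destruct (Rlt_dec 0 y).
  - left. split; auto. rewrite Rabs_right in H1 by lra. apply Rmult_eq_reg_l with y; lra.
  - right. split; [lra|]. rewrite Rabs_left in H1 by lra. apply Rmult_eq_reg_l with y; lra.
Qed.

Lemma subgrad_abs_nonzero q y : subgrad_abs q y -> y <> 0 -> Rabs q = 1.
Proof.
  intros H Hy. destruct (subgrad_abs_sign q y H Hy) as [[_ ->]|[_ ->]];
    unfold Rabs; destruct Rcase_abs; lra.
Qed.

Lemma subgrad_abs_monotone q1 y1 q2 y2 :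
  subgrad_abs q1 y1 -> subgrad_abs q2 y2 -> 0 <= (q1 - q2) * (y1 - y2).
Proof.
  intros H1 H2. rewrite subgrad_abs_iff in H1, H2.
  pose proof (H1 y2). pose proof (H2 y1). nra.
Qed.

Lemma subgrad_abs_perturb q y d : subgrad_abs q y -> y <> 0 -> Rabs d < Rabs y ->
  subgrad_abs q (y + d).
Proof.
  intros H Hy Hd. destruct (subgrad_abs_sign q y H Hy) as [[Hp ->]|[Hn ->]]; split;
    unfold Rabs in *; repeat destruct Rcase_abs; lra.
Qed.

Lemma subgrad_abs_locally_const q1 y1 q2 y2 :
  subgrad_abs q1 y1 -> subgrad_abs q2 y2 -> y1 <> 0 -> Rabs (y2 - y1) < Rabs y1 -> q2 = q1.
Proof.
  intros H1 H2 Hy1 Hd.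
  assert (Hy2 : y2 <> 0) by (intros ->; rewrite Rminus_0_l, Rabs_Ropp in Hd; lra).
  destruct (subgrad_abs_sign _ _ H1 Hy1) as [[? ->]|[? ->]];
    destruct (subgrad_abs_sign _ _ H2 Hy2) as [[? ->]|[? ->]]; auto;
    unfold Rabs in Hd; repeat destruct Rcase_abs in Hd; lra.
Qed.

Lemma is_S_iff_kkt n A u y : is_S n A u y <-> kkt n A u y.
Proof.
  split.
  - intros H i Hi. apply subgrad_abs_iff. intros a.
    set (v := fun j => if Nat.eqb j i then a else y j).
    specialize (H v).
    assert (Hin : forall w : vec, inner n w (vsub v y) = w i * (a - y i)).
    { intros w. unfold inner. rewrite <- (rsum_delta n (fun j => w j * (a - y j)) i Hi).
      apply rsum_ext. intros j Hj. unfold vsub, v. destruct (Nat.eqb j i); ring. }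
    assert (Hnorm : norm1 n v = norm1 n y + (Rabs a - Rabs (y i))).
    { unfold norm1. rewrite (rsum_update n (fun j => Rabs (y j)) (fun j => Rabs (v j)) i Hi).
      - unfold v. now rewrite Nat.eqb_refl.
      - intros j Hj Hji. unfold v. destruct (Nat.eqb_spec j i); [lia|auto]. }
    rewrite !Hin, Hnorm in H. lra.
  - intros H v. apply Rle_ge.
    enough (0 <= inner n (mv n A y) (vsub v y) + norm1 n v - norm1 n y - inner n u (vsub v y))
      by lra.
    unfold inner, norm1. rewrite <- rsum_plus, <- !rsum_minus.
    apply rsum_nonneg. intros i Hi. pose proof (proj1 (subgrad_abs_iff _ _) (H i Hi) (v i)).
    unfold vsub. lra.
Qed.

(* The proximal map of t |.| (soft thresholding). *)
Definition soft (t a : R) : R :=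
  if Rlt_dec t a then a - t else if Rlt_dec a (- t) then a + t else 0.

Lemma soft_lipschitz t a b : 0 < t -> Rabs (soft t a - soft t b) <= Rabs (a - b).
Proof.
  intros Ht. unfold soft.
  destruct (Rlt_dec t a); destruct (Rlt_dec t b); try destruct (Rlt_dec a (-t));
    try destruct (Rlt_dec b (-t)); unfold Rabs; repeat destruct Rcase_abs; lra.
Qed.

Lemma soft_fixed_point t y q : 0 < t -> y = soft t (y + t * q) -> subgrad_abs q y.
Proof.
  intros Ht Hy. unfold soft in Hy.
  destruct (Rlt_dec t (y + t * q)); [|destruct (Rlt_dec (y + t * q) (- t))].
  - assert (q = 1) as -> by (apply Rmult_eq_reg_l with t; lra).
    split; unfold Rabs; repeat destruct Rcase_abs; lra.
  - assert (q = -1) as -> by (apply Rmult_eq_reg_l with t; lra).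
    split; unfold Rabs; repeat destruct Rcase_abs; lra.
  - subst y. split; [|rewrite Rabs_R0; ring]. apply Rabs_le. split.
    + apply Rmult_le_reg_l with t; lra.
    + apply Rmult_le_reg_l with t; lra.
Qed.

Lemma kkt_exists n A u : spd n A -> exists y, kkt n A u y.
Proof.
  intros hA. destruct (projected_gradient_fixed_point n A hA) as [tau [Ht Hfp]].
  destruct (Hfp u (fun _ a => soft tau a)) as [y Hy]; [intros; apply soft_lipschitz; auto|].
  exists y. intros i Hi. apply (soft_fixed_point tau); auto.
  rewrite (Hy i Hi) at 1. f_equal. ring.
Qed.

Lemma kkt_monotone n A u1 u2 y1 y2 : kkt n A u1 y1 -> kkt n A u2 y2 ->
  inner n (vsub y1 y2) (mv n A (vsub y1 y2)) <= inner n (vsub u1 u2) (vsub y1 y2).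
Proof.
  intros H1 H2.
  enough (0 <= inner n (vsub u1 u2) (vsub y1 y2) - inner n (vsub y1 y2) (mv n A (vsub y1 y2)))
    by lra.
  unfold inner. rewrite <- rsum_minus. apply rsum_nonneg. intros i Hi.
  pose proof (subgrad_abs_monotone _ _ _ _ (H1 i Hi) (H2 i Hi)).
  rewrite mv_minus. unfold vsub. lra.
Qed.

Lemma kkt_lipschitz n A : spd n A -> exists K, 0 < K /\
  forall u1 u2 y1 y2, kkt n A u1 y1 -> kkt n A u2 y2 ->
  forall i, (i < n)%nat -> Rabs (y1 i - y2 i) <= K * norm1 n (vsub u1 u2).
Proof.
  intros hA. destruct (spd_coercive n A hA) as [c [Hc Hcoer]].
  exists (/ c). split; [now apply Rinv_0_lt_compat|].
  intros u1 u2 y1 y2 H1 H2 i Hi.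
  pose proof (kkt_monotone n A u1 u2 y1 y2 H1 H2) as Hm.
  set (d := vsub y1 y2) in *. set (du := vsub u1 u2) in *.
  pose proof (Hcoer d). pose proof (cauchy_schwarz n du d).
  pose proof (inner_nonneg n d). pose proof (inner_nonneg n du).
  assert (Hdd : c * c * inner n d d <= inner n du du).
  { destruct (Req_dec (inner n d d) 0) as [Hz|Hz]; [rewrite Hz; lra|].
    apply Rmult_le_reg_r with (inner n d d); [lra|].
    assert (c * inner n d d <= inner n du d) by lra.
    assert (0 <= c * inner n d d) by nra.
    assert (c * inner n d d * (c * inner n d d) <= inner n du d * inner n du d) by nra.
    nra. }
  pose proof (sqr_coord_le_inner n d i Hi). pose proof (inner_le_norm1_sqr n du).
  pose proof (norm1_nonneg n du).
  assert (Hsq : d i * d i <= (/ c * norm1 n du) * (/ c * norm1 n du)).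
  { replace (/ c * norm1 n du * (/ c * norm1 n du)) with (norm1 n du * norm1 n du / (c * c))
      by (field; lra).
    apply Rmult_le_reg_l with (c * c); [nra|].
    replace (c * c * (norm1 n du * norm1 n du / (c * c))) with (norm1 n du * norm1 n du)
      by (field; lra). nra. }
  apply Rsqr_le_abs_0 in Hsq. rewrite (Rabs_right (/ c * norm1 n du)) in Hsq; auto.
  apply Rle_ge, Rmult_le_pos; auto. apply Rlt_le, Rinv_0_lt_compat; auto.
Qed.

Lemma Ssol_kkt n A u : spd n A -> kkt n A u (Ssol n A u).
Proof.
  intros hA. apply is_S_iff_kkt. unfold Ssol. apply epsilon_spec.
  destruct (kkt_exists n A u hA) as [y Hy]. exists y. now apply is_S_iff_kkt.
Qed.

Lemma Ssol_unique n A u y : spd n A -> kkt n A u y -> forall i, (i < n)%nat -> Ssol n A u i = y i.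
Proof.
  intros hA Hy i Hi. destruct (kkt_lipschitz n A hA) as [K [HK Hlip]].
  pose proof (Hlip u u (Ssol n A u) y (Ssol_kkt n A u hA) Hy i Hi).
  replace (norm1 n (vsub u u)) with 0 in H
    by (symmetry; apply rsum_zero; intros; unfold vsub; rewrite Rminus_diag; apply Rabs_R0).
  pose proof (Rabs_pos (Ssol n A u i - y i)).
  destruct (Req_dec (Ssol n A u i - y i) 0); [lra|].
  pose proof (Rabs_pos_lt _ H1). nra.
Qed.

(** * Inverses and the matrices A(N) *)

Lemma pos_def_quad_zero n A z : pos_def n A ->
  (forall k, (k < n)%nat -> z k * mv n A z k = 0) -> forall i, (i < n)%nat -> z i = 0.
Proof.
  intros Hp H i Hi. apply NNPP. intros Hz.
  assert (0 < inner n z (mv n A z)) by (apply Hp; exists i; auto).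
  assert (inner n z (mv n A z) = 0) by (apply rsum_zero; auto).
  lra.
Qed.

Lemma spd_solve n A b : spd n A -> exists y, forall i, (i < n)%nat -> mv n A y i = b i.
Proof.
  intros hA. destruct (projected_gradient_fixed_point n A hA) as [tau [Ht Hfp]].
  destruct (Hfp b (fun _ a => a)) as [y Hy]; [intros; lra|].
  exists y. intros i Hi. specialize (Hy i Hi).
  assert (tau * (mv n A y i - b i) = 0) by lra.
  apply Rmult_integral in H. lra.
Qed.

Lemma spd_inverse n A : spd n A -> exists X, meq n (mmul n A X) idm /\ meq n (mmul n X A) idm.
Proof.
  intros hA.
  set (col := fun j => epsilon (inhabits (fun _ : nat => 0))
                          (fun y : vec => forall i, (i < n)%nat -> mv n A y i = idm i j)).
  assert (Hcol : forall j i, (i < n)%nat -> mv n A (col j) i = idm i j)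
    by (intros j; apply epsilon_spec, spd_solve, hA).
  set (X := fun i j => col j i).
  assert (HAX : meq n (mmul n A X) idm) by (intros i j Hi Hj; apply Hcol; auto).
  exists X. split; auto. intros i j Hi Hj.
  set (z := fun k => mmul n X A k j - idm k j).
  enough (z i = 0) by (unfold z in H; lra).
  apply (pos_def_quad_zero n A z (proj2 hA)); auto. intros k Hk.
  enough (mv n A z k = 0) as -> by ring. unfold z. change (fun k => mmul n X A k j - idm k j)
    with (vsub (fun k => mmul n X A k j) (fun k => idm k j)).
  rewrite mv_minus. unfold mv.
  change (rsum n (fun l => A k l * mmul n X A l j)) with (mmul n A (mmul n X A) k j).
  change (rsum n (fun l => A k l * idm l j)) with (mmul n A idm k j).
  rewrite <- mmul_assoc, mmul_idm_r by auto.
  rewrite (mmul_idm_row n (mmul n A X) A k j Hk); [ring|].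
  intros l Hl. apply HAX; auto.
Qed.

Lemma minv_spec n M : spd n M -> meq n (mmul n M (minv n M)) idm /\ meq n (mmul n (minv n M) M) idm.
Proof. intros H. unfold minv. apply epsilon_spec. now apply spd_inverse. Qed.

Lemma A_of_spd n A N : spd n A -> spd n (A_of A N).
Proof.
  intros hA. split.
  - intros i j Hi Hj. unfold A_of. now rewrite orb_comm, Nat.eqb_sym, (proj1 hA i j).
  - intros x [i [Hi Hx]].
    set (x' := fun k => if N k then 0 else x k).
    assert (Hmv : forall k, (k < n)%nat -> mv n (A_of A N) x k = if N k then x k else mv n A x' k).
    { intros k Hk. unfold mv, A_of. destruct (N k) eqn:Nk; simpl.
      - rewrite <- (rsum_delta n x k Hk). apply rsum_ext.
        intros j Hj. rewrite Nat.eqb_sym. destruct (Nat.eqb j k); ring.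
      - apply rsum_ext. intros j Hj. unfold x'. destruct (N j) eqn:Nj; auto.
        destruct (Nat.eqb_spec k j); [subst; congruence|ring]. }
    assert (E : inner n x (mv n (A_of A N) x) =
                rsum n (fun k => if N k then x k * x k else 0) + inner n x' (mv n A x')).
    { unfold inner. rewrite <- rsum_plus. apply rsum_ext. intros k Hk. rewrite Hmv by auto.
      unfold x'. destruct (N k); ring. }
    assert (Hsq : forall k, (k < n)%nat -> 0 <= (if N k then x k * x k else 0))
      by (intros k _; destruct (N k); [apply Rle_0_sqr|lra]).
    assert (H2 : 0 <= inner n x' (mv n A x')).
    { destruct (classic (exists k, (k < n)%nat /\ x' k <> 0)) as [Hx'|Hx'].
      - apply Rlt_le, (proj2 hA), Hx'.
      - right. symmetry. unfold inner. apply rsum_zero. intros k Hk.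
        destruct (Req_dec (x' k) 0) as [->|Hne]; [ring|exfalso; eauto]. }
    rewrite E. destruct (N i) eqn:Ni.
    + pose proof (rsum_term_le n _ i Hsq Hi). simpl in H. rewrite Ni in H.
      pose proof (Rsqr_pos_lt _ Hx). unfold Rsqr in H0. lra.
    + assert (0 < inner n x' (mv n A x')).
      { apply (proj2 hA). exists i. split; auto. unfold x'. now rewrite Ni. }
      pose proof (rsum_nonneg n _ Hsq). lra.
Qed.

Definition active_jacobian (n : nat) (A : mat) (N : nat -> bool) (M : mat) : Prop :=
  (forall i j, (i < n)%nat -> (j < n)%nat -> N i = true -> M i j = 0) /\
  (forall i j, (i < n)%nat -> (j < n)%nat -> N i = false -> mmul n A M i j = idm i j).

Lemma A_of_mmul_inactive_row n A N M i j : (i < n)%nat -> N i = false ->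
  (forall k, (k < n)%nat -> N k = true -> M k j = 0) ->
  mmul n (A_of A N) M i j = mmul n A M i j.
Proof.
  intros Hi Ni HM. apply rsum_ext. intros k Hk. unfold A_of. rewrite Ni. simpl.
  destruct (N k) eqn:Nk; auto. rewrite HM by auto. ring.
Qed.

Lemma A_of_mmul_active_row n A N M i j : (i < n)%nat -> N i = true ->
  mmul n (A_of A N) M i j = M i j.
Proof.
  intros Hi Ni. apply mmul_idm_row; auto. intros k _. unfold A_of, idm. now rewrite Ni.
Qed.

Lemma A_of_mmul_chi_iff n A N M :
  meq n (mmul n (A_of A N) M) (chi N) <-> active_jacobian n A N M.
Proof.
  assert (Hchi : forall i j, N i = true -> chi N i j = 0)
    by (intros i j Ni; unfold chi; rewrite Ni; now destruct (Nat.eqb i j)).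
  split.
  - intros H.
    assert (Hact : forall i j, (i < n)%nat -> (j < n)%nat -> N i = true -> M i j = 0)
      by (intros i j Hi Hj Ni; rewrite <- (A_of_mmul_active_row n A N M i j Hi Ni), H; auto).
    split; auto. intros i j Hi Hj Ni.
    rewrite <- (A_of_mmul_inactive_row n A N M i j Hi Ni) by (intros; apply Hact; auto).
    rewrite H by auto. unfold chi, idm. now rewrite Ni.
  - intros [Hact Hin] i j Hi Hj. destruct (N i) eqn:Ni.
    + rewrite A_of_mmul_active_row, Hchi; auto.
    + rewrite A_of_mmul_inactive_row, Hin by auto. unfold chi, idm. now rewrite Ni.
Qed.

Lemma meq_minv_chi_iff n A N M : spd n A ->
  meq n M (mmul n (minv n (A_of A N)) (chi N)) <-> active_jacobian n A N M.
Proof.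
  intros hA. rewrite <- A_of_mmul_chi_iff.
  destruct (minv_spec n (A_of A N) (A_of_spd n A N hA)) as [HAX HXA].
  set (X := minv n (A_of A N)) in *. split.
  - intros HM i j Hi Hj. rewrite <- (mmul_idm_row n (mmul n (A_of A N) X) (chi N) i j Hi)
      by (intros; apply HAX; auto).
    rewrite mmul_assoc. apply rsum_ext. intros k Hk. now rewrite HM.
  - intros H i j Hi Hj. rewrite <- (mmul_idm_row n (mmul n X (A_of A N)) M i j Hi)
      by (intros; apply HXA; auto).
    rewrite mmul_assoc. apply rsum_ext. intros k Hk. now rewrite H.
Qed.

(** * The Jacobian at points of differentiability *)

Lemma derivable_pt_lim_local_min f x l : derivable_pt_lim f x l ->
  (exists d, 0 < d /\ forall t, Rabs (t - x) < d -> f x <= f t) -> l = 0.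
Proof.
  intros Hf [d [Hd Hmin]].
  change l with (derive_pt f x (exist _ l Hf)).
  apply (deriv_minimum f (x - d) (x + d)); try lra.
  intros t H1 H2. apply Hmin, Rabs_def1; lra.
Qed.

Lemma derivable_pt_lim_near f x l : derivable_pt_lim f x l ->
  forall e, 0 < e -> exists d, 0 < d /\ forall t, Rabs (t - x) < d -> Rabs (f t - f x) < e.
Proof.
  intros Hf e He.
  destruct (derivable_continuous_pt f x (exist _ l Hf) e He) as [d [Hd Hc]].
  exists d. split; [lra|]. intros t Ht.
  destruct (Req_dec t x) as [->|Hne]; [rewrite Rminus_diag, Rabs_R0; lra|].
  apply (Hc t). split; [split; [exact I|auto]|exact Ht].
Qed.

Lemma derivable_pt_lim_affine a c x : derivable_pt_lim (fun t => a + t * c) x c.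
Proof.
  intros e He. exists (mkposreal 1 Rlt_0_1). intros h Hh _.
  replace ((a + (x + h) * c - (a + x * c)) / h - c) with 0 by (field; auto).
  rewrite Rabs_R0. lra.
Qed.

Lemma derivable_pt_lim_rsum n (f : nat -> R -> R) (l : nat -> R) x :
  (forall k, (k < n)%nat -> derivable_pt_lim (f k) x (l k)) ->
  derivable_pt_lim (fun t => rsum n (fun k => f k t)) x (rsum n l).
Proof.
  induction n as [|n IH]; intros H; simpl.
  - apply derivable_pt_lim_const.
  - apply (derivable_pt_lim_plus (fun t => rsum n (fun k => f k t)) (f n));
      [apply IH; intros|]; apply H; lia.
Qed.

(* f and g play the roles of y_i and q_i along a line through a point of
   differentiability. *)
Section Complementarity.

Variables (f g : R -> R) (a b : R).
Hypothesis f_deriv : derivable_pt_lim f 0 a.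
Hypothesis g_deriv : derivable_pt_lim g 0 b.
Hypothesis fg_subgrad : forall t, subgrad_abs (g t) (f t).

Lemma complementarity_strongly_active : Rabs (g 0) < 1 -> a = 0.
Proof.
  intros Hg. apply (derivable_pt_lim_local_min f 0 a f_deriv).
  destruct (derivable_pt_lim_near g 0 b g_deriv (1 - Rabs (g 0))) as [d [Hd Hnear]]; [lra|].
  exists d. split; auto. intros t Ht.
  rewrite (subgrad_abs_zero _ _ (fg_subgrad 0) Hg).
  rewrite (subgrad_abs_zero (g t) (f t)); [lra|apply fg_subgrad|].
  pose proof (Rabs_triang_inv (g t) (g 0)). specialize (Hnear t Ht). lra.
Qed.

Lemma complementarity_inactive : f 0 <> 0 -> b = 0.
Proof.
  intros Hf. apply (derivable_pt_lim_local_min g 0 b g_deriv).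
  destruct (derivable_pt_lim_near f 0 a f_deriv (Rabs (f 0))) as [d [Hd Hnear]];
    [now apply Rabs_pos_lt|].
  exists d. split; auto. intros t Ht.
  rewrite (subgrad_abs_locally_const (g 0) (f 0) (g t) (f t)); auto. lra.
Qed.

Lemma complementarity_biactive : f 0 = 0 -> Rabs (g 0) = 1 -> a = 0 /\ b = 0.
Proof.
  intros Hf Hg. set (s := g 0) in *.
  assert (Hs : s = 1 \/ s = -1) by (unfold Rabs in Hg; destruct Rcase_abs in Hg; [right|left]; lra).
  assert (Hss : s * s = 1) by (destruct Hs as [-> | ->]; ring).
  destruct (derivable_pt_lim_near g 0 b g_deriv 1) as [d [Hd Hnear]]; [lra|].
  split.
  - assert (Hsa : s * a = 0).
    { apply (derivable_pt_lim_local_min (mult_real_fct s f) 0);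
        [now apply derivable_pt_lim_scal|].
      exists d. split; auto. intros t Ht. unfold mult_real_fct. rewrite Hf, Rmult_0_r.
      destruct (Req_dec (f t) 0) as [->|Hft]; [lra|].
      pose proof (Hnear t Ht). pose proof (fg_subgrad t) as Ht'.
      destruct (subgrad_abs_sign _ _ Ht' Hft) as [[? Hq]|[? Hq]]; rewrite Hq in *;
        fold s in H; destruct Hs as [Hs|Hs]; rewrite Hs in *;
        unfold Rabs in H; destruct Rcase_abs in H; lra. }
    destruct Hs as [Hs|Hs]; rewrite Hs in Hsa; lra.
  - assert (Hsb : - s * b = 0).
    { apply (derivable_pt_lim_local_min (mult_real_fct (- s) g) 0);
        [now apply derivable_pt_lim_scal|].
      exists d. split; auto. intros t _. unfold mult_real_fct. fold s.
      destruct (fg_subgrad t) as [Hgt _].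
      assert (s * g t <= 1); [|nra].
      pose proof (Rle_abs (s * g t)). rewrite Rabs_mult in H.
      replace (Rabs s) with 1 in H
        by (destruct Hs as [-> | ->]; unfold Rabs; destruct Rcase_abs; lra).
      lra. }
    destruct Hs as [Hs|Hs]; rewrite Hs in Hsb; lra.
Qed.

End Complementarity.

(* Ssol is defined by a choice operator, so rewriting its argument needs an equality
   of functions, not just of coordinates. *)
Lemma vadd_basisv_0 w j : vadd w (basisv j 0) = w.
Proof.
  apply functional_extensionality. intros i. unfold vadd, basisv. destruct (Nat.eqb i j); ring.
Qed.

Lemma has_deriv_partial n F w J i j : has_deriv n F w J -> (i < n)%nat -> (j < n)%nat ->
  derivable_pt_lim (fun t => F (vadd w (basisv j t)) i) 0 (J i j).
Proof.
  intros HF Hi Hj e He. destruct (HF (e / 2)) as [d [Hd Hrem]]; [lra|].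
  exists (mkposreal d Hd). intros h Hh0 Hh. simpl in Hh.
  rewrite Rplus_0_l, vadd_basisv_0.
  specialize (Hrem (basisv j h)). rewrite norm1_basisv in Hrem by auto.
  specialize (Hrem Hh).
  pose proof (Rabs_coord_le_norm1 n
    (vsub (vsub (F (vadd w (basisv j h))) (F w)) (mv n J (basisv j h))) i Hi).
  unfold vsub at 1 2 in H. rewrite mv_basisv in H by auto.
  pose proof (Rabs_pos_lt h Hh0).
  replace ((F (vadd w (basisv j h)) i - F w i) / h - J i j)
    with ((F (vadd w (basisv j h)) i - F w i - h * J i j) * / h) by (field; auto).
  rewrite Rabs_mult, Rabs_inv.
  apply Rmult_lt_reg_r with (Rabs h); auto.
  rewrite Rmult_assoc, Rinv_l by lra.
  assert (0 < e * Rabs h) by (apply Rmult_lt_0_compat; lra). lra.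
Qed.

Lemma qvec_partial n A w J i j : has_deriv n (Ssol n A) w J -> (i < n)%nat -> (j < n)%nat ->
  derivable_pt_lim (fun t => qvec n A (vadd w (basisv j t)) i) 0 (idm i j - mmul n A J i j).
Proof.
  intros HJ Hi Hj.
  replace (fun t => qvec n A (vadd w (basisv j t)) i)
    with (fun t => (w i + t * idm i j) - rsum n (fun k => A i k * Ssol n A (vadd w (basisv j t)) k))
    by (apply functional_extensionality; intros t; unfold qvec, vsub, vadd, mv;
        now rewrite basisv_idm).
  apply (derivable_pt_lim_minus (fun t => w i + t * idm i j)); [apply derivable_pt_lim_affine|].
  apply (derivable_pt_lim_rsum n (fun k t => A i k * Ssol n A (vadd w (basisv j t)) k)).
  intros k Hk. apply (derivable_pt_lim_scal (fun t => Ssol n A (vadd w (basisv j t)) k)).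
  now apply (has_deriv_partial n (Ssol n A)).
Qed.

Section Differentiable_point.

Variables (n : nat) (A : mat) (w : vec) (J : mat).
Hypothesis hA : spd n A.
Hypothesis J_deriv : has_deriv n (Ssol n A) w J.

Let y := Ssol n A w.
Let q := qvec n A w.

Lemma jacobian_entry_cases i j : (i < n)%nat -> (j < n)%nat ->
  (Rabs (q i) < 1 -> J i j = 0) /\
  (y i <> 0 -> mmul n A J i j = idm i j) /\
  (y i = 0 -> Rabs (q i) = 1 -> J i j = 0 /\ mmul n A J i j = idm i j).
Proof.
  intros Hi Hj.
  pose proof (has_deriv_partial n (Ssol n A) w J i j J_deriv Hi Hj) as Hf.
  pose proof (qvec_partial n A w J i j J_deriv Hi Hj) as Hg.
  assert (Hfg : forall t, subgrad_abs (qvec n A (vadd w (basisv j t)) i)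
                                      (Ssol n A (vadd w (basisv j t)) i))
    by (intros t; apply (Ssol_kkt n A _ hA i Hi)).
  assert (Hf0 : Ssol n A (vadd w (basisv j 0)) i = y i) by now rewrite vadd_basisv_0.
  assert (Hg0 : qvec n A (vadd w (basisv j 0)) i = q i) by now rewrite vadd_basisv_0.
  split; [|split].
  - intros Hq. apply (complementarity_strongly_active _ _ _ _ Hf Hg Hfg). now rewrite Hg0.
  - intros Hy. apply Rminus_diag_uniq_sym.
    apply (complementarity_inactive _ _ _ _ Hf Hg Hfg). now rewrite Hf0.
  - intros Hy Hq.
    destruct (complementarity_biactive _ _ _ _ Hf Hg Hfg) as [H1 H2];
      [now rewrite Hf0|now rewrite Hg0|].
    split; [auto|lra].
Qed.

Lemma differentiable_no_biactive i : (i < n)%nat -> y i = 0 -> Rabs (q i) < 1.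
Proof.
  intros Hi Hy. destruct (Ssol_kkt n A w hA i Hi) as [Hq1 _].
  destruct (Rle_lt_or_eq_dec _ _ Hq1) as [|Hq]; auto. exfalso.
  set (z := fun k => J k i).
  assert (Hz : forall k, (k < n)%nat -> z k = 0).
  { apply (pos_def_quad_zero n A z (proj2 hA)). intros k Hk.
    destruct (jacobian_entry_cases k i Hk Hi) as [Hs [Hin Hbi]].
    change (mv n A z k) with (mmul n A J k i). unfold z.
    destruct (Req_dec (y k) 0) as [Hyk|Hyk].
    - destruct (Ssol_kkt n A w hA k Hk) as [Hqk _].
      destruct (Rle_lt_or_eq_dec _ _ Hqk) as [Hlt|Heq].
      + rewrite Hs by auto. ring.
      + rewrite (proj1 (Hbi Hyk Heq)). ring.
    - rewrite (Hin Hyk). unfold idm. destruct (Nat.eqb_spec k i); [subst; contradiction|ring]. }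
  destruct (jacobian_entry_cases i i Hi Hi) as [_ [_ Hbi]].
  pose proof (proj2 (Hbi Hy Hq)) as HAJ.
  change (mmul n A J i i) with (mv n A z i) in HAJ.
  rewrite (mv_ext n A z (fun _ => 0) i Hz) in HAJ.
  unfold mv, idm in HAJ. rewrite rsum_zero, Nat.eqb_refl in HAJ by (intros; ring). lra.
Qed.

Lemma differentiable_jacobian_rows i : (i < n)%nat ->
  (Rabs (q i) < 1 /\ forall j, (j < n)%nat -> J i j = 0) \/
  (y i <> 0 /\ forall j, (j < n)%nat -> mmul n A J i j = idm i j).
Proof.
  intros Hi. destruct (Req_dec (y i) 0) as [Hy|Hy].
  - left. pose proof (differentiable_no_biactive i Hi Hy) as Hq.
    split; auto. intros j Hj. now apply (proj1 (jacobian_entry_cases i j Hi Hj)).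
  - right. split; auto. intros j Hj. now apply (proj1 (proj2 (jacobian_entry_cases i j Hi Hj))).
Qed.

End Differentiable_point.

(** * Limits of Jacobians *)

Lemma strongly_active_iff n A u i :
  strongly_active n A u i = true <-> Rabs (qvec n A u i) < 1.
Proof. unfold strongly_active. destruct (Rlt_dec _ 1); split; congruence || tauto. Qed.

Lemma biactive_iff n A u i :
  biactive n A u i = true <-> Ssol n A u i = 0 /\ Rabs (qvec n A u i) = 1.
Proof.
  unfold biactive. destruct (Req_EM_T (Ssol n A u i) 0); [|split; intuition congruence].
  destruct (Req_EM_T (Rabs (qvec n A u i)) 1); split; intuition congruence.
Qed.

Lemma Un_cv_frequently_eq (x : nat -> R) c l :
  (forall N, exists k, (N <= k)%nat /\ x k = c) -> Un_cv x l -> l = c.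
Proof.
  intros H Hx. apply NNPP. intros Hne.
  destruct (Hx (Rabs (l - c))) as [N HN]; [apply Rabs_pos_lt; lra|].
  destruct (H N) as [k [Hk Hxk]]. specialize (HN k Hk). unfold R_dist in HN.
  rewrite Hxk, Rabs_minus_sym in HN. lra.
Qed.

Lemma Un_cv_eventually_eq (x : nat -> R) c l :
  (exists N, forall k, (N <= k)%nat -> x k = c) -> Un_cv x l -> l = c.
Proof.
  intros [N HN]. apply Un_cv_frequently_eq. intros N'.
  exists (max N N'). split; [lia|]. apply HN. lia.
Qed.

Lemma Ssol_cv n A (w : nat -> vec) u : spd n A -> vseq_cv n w u ->
  forall i, (i < n)%nat -> Un_cv (fun k => Ssol n A (w k) i) (Ssol n A u i).
Proof.
  intros hA Hw i Hi e He. destruct (kkt_lipschitz n A hA) as [K [HK Hlip]].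
  destruct (Hw (e / K)) as [N HN]; [apply Rdiv_lt_0_compat; auto|].
  exists N. intros k Hk. unfold R_dist.
  eapply Rle_lt_trans; [apply (Hlip _ _ _ _ (Ssol_kkt n A _ hA) (Ssol_kkt n A _ hA) i Hi)|].
  specialize (HN k Hk). apply Rmult_lt_reg_l with (/ K); [now apply Rinv_0_lt_compat|].
  rewrite <- Rmult_assoc, Rinv_l, Rmult_1_l by lra. unfold Rdiv in HN. lra.
Qed.

Lemma qvec_cv n A (w : nat -> vec) u : spd n A -> vseq_cv n w u ->
  forall i, (i < n)%nat -> Un_cv (fun k => qvec n A (w k) i) (qvec n A u i).
Proof.
  intros hA Hw i Hi. apply CV_minus.
  - intros e He. destruct (Hw e He) as [N HN]. exists N. intros k Hk.
    eapply Rle_lt_trans; [apply (Rabs_coord_le_norm1 n (vsub (w k) u) i Hi)|auto].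
  - apply (rsum_cv n (fun k l => A i l * Ssol n A (w k) l)). intros l Hl.
    apply CV_mult; [apply Un_cv_const|now apply Ssol_cv].
Qed.

Lemma mmul_cv n A (J : nat -> mat) M i j :
  (forall k, (k < n)%nat -> Un_cv (fun m => J m k j) (M k j)) ->
  Un_cv (fun m => mmul n A (J m) i j) (mmul n A M i j).
Proof.
  intros H. apply (rsum_cv n (fun m k => A i k * J m k j)). intros k Hk.
  apply CV_mult; [apply Un_cv_const|auto].
Qed.

Section Bouligand_limit.

Variables (n : nat) (A : mat) (u : vec) (M : mat) (w : nat -> vec) (J : nat -> mat).
Hypothesis hA : spd n A.
Hypothesis w_cv : vseq_cv n w u.
Hypothesis J_deriv : forall k, has_deriv n (Ssol n A) (w k) (J k).
Hypothesis J_cv : mseq_cv n J M.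

Lemma limit_row_strongly_active i : (i < n)%nat -> Rabs (qvec n A u i) < 1 ->
  forall j, (j < n)%nat -> M i j = 0.
Proof.
  intros Hi Hq j Hj. apply (Un_cv_eventually_eq (fun k => J k i j)); [|now apply J_cv].
  destruct (qvec_cv n A w u hA w_cv i Hi (1 - Rabs (qvec n A u i))) as [N HN]; [lra|].
  exists N. intros k Hk. specialize (HN k Hk). unfold R_dist in HN.
  pose proof (Rabs_triang_inv (qvec n A (w k) i) (qvec n A u i)).
  destruct (differentiable_jacobian_rows n A (w k) (J k) hA (J_deriv k) i Hi)
    as [[_ HJ]|[Hy _]]; [now apply HJ|].
  pose proof (subgrad_abs_nonzero _ _ (Ssol_kkt n A (w k) hA i Hi) Hy). unfold qvec, vsub in *. lra.
Qed.

Lemma limit_row_inactive i : (i < n)%nat -> Ssol n A u i <> 0 ->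
  forall j, (j < n)%nat -> mmul n A M i j = idm i j.
Proof.
  intros Hi Hy j Hj. apply (Un_cv_eventually_eq (fun k => mmul n A (J k) i j));
    [|apply mmul_cv; intros; now apply J_cv].
  destruct (Ssol_cv n A w u hA w_cv i Hi (Rabs (Ssol n A u i))) as [N HN];
    [now apply Rabs_pos_lt|].
  exists N. intros k Hk. specialize (HN k Hk). unfold R_dist in HN.
  destruct (differentiable_jacobian_rows n A (w k) (J k) hA (J_deriv k) i Hi)
    as [[Hq _]|[_ HJ]]; [|now apply HJ].
  rewrite (subgrad_abs_zero _ _ (Ssol_kkt n A (w k) hA i Hi) Hq) in HN.
  rewrite Rminus_0_l, Rabs_Ropp in HN. lra.
Qed.

Lemma limit_row_dichotomy i : (i < n)%nat ->
  (forall j, (j < n)%nat -> M i j = 0) \/ (forall j, (j < n)%nat -> mmul n A M i j = idm i j).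
Proof.
  intros Hi.
  destruct (classic (forall N, exists k, (N <= k)%nat /\ forall j, (j < n)%nat -> J k i j = 0))
    as [Hfreq|Hfreq].
  - left. intros j Hj. apply (Un_cv_frequently_eq (fun k => J k i j)); [|now apply J_cv].
    intros N. destruct (Hfreq N) as [k [Hk HJ]]. exists k. auto.
  - right. intros j Hj. apply (Un_cv_eventually_eq (fun k => mmul n A (J k) i j));
      [|apply mmul_cv; intros; now apply J_cv].
    apply not_all_ex_not in Hfreq. destruct Hfreq as [N HN]. exists N. intros k Hk.
    destruct (differentiable_jacobian_rows n A (w k) (J k) hA (J_deriv k) i Hi)
      as [[_ HJ]|[_ HJ]]; [exfalso; eauto|auto].
Qed.

End Bouligand_limit.

Lemma bouligand_active_jacobian n A u M : spd n A -> bouligand n A u M ->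
  exists B0 : nat -> bool,
    (forall i, B0 i = true -> (i < n)%nat /\ biactive n A u i = true) /\
    active_jacobian n A (fun i => orb (strongly_active n A u i) (B0 i)) M.
Proof.
  intros hA [w [J [Hw [HJ HM]]]].
  set (P := fun i => (i < n)%nat /\ biactive n A u i = true /\ forall j, (j < n)%nat -> M i j = 0).
  exists (fun i => if excluded_middle_informative (P i) then true else false).
  split; [intros i; destruct excluded_middle_informative as [[? [? _]]|]; easy|].
  split.
  - intros i j Hi Hj HN. apply orb_true_iff in HN. destruct HN as [Hs|HB].
    + apply strongly_active_iff in Hs. now apply (limit_row_strongly_active n A u M w J).
    + destruct excluded_middle_informative as [[_ [_ H]]|]; [auto|discriminate].
  - intros i j Hi Hj HN. apply orb_false_iff in HN. destruct HN as [Hs HB].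
    destruct (Req_dec (Ssol n A u i) 0) as [Hy|Hy];
      [|now apply (limit_row_inactive n A u M w J)].
    destruct (limit_row_dichotomy n A M w J hA HJ HM i Hi) as [Hz|]; auto.
    destruct excluded_middle_informative as [|HnP]; [discriminate|]. exfalso. apply HnP.
    repeat split; auto. apply biactive_iff. split; auto.
    destruct (Ssol_kkt n A u hA i Hi) as [Hq _].
    assert (~ Rabs (qvec n A u i) < 1) by (rewrite <- strongly_active_iff; congruence).
    unfold qvec, vsub in *. lra.
Qed.

(** * Points without biactive indices *)

Lemma kkt_residual_shift n A w h y M i :
  vadd w h i - mv n A (vadd y (mv n M h)) i = (w i - mv n A y i) + h i - mv n (mmul n A M) h i.
Proof. rewrite mv_plus, mv_mv. unfold vadd. ring. Qed.

Lemma active_jacobian_kkt_step n A w N M h : spd n A ->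
  (forall i, (i < n)%nat ->
     (N i = true /\ Rabs (qvec n A w i) < 1) \/ (N i = false /\ Ssol n A w i <> 0)) ->
  active_jacobian n A N M ->
  (forall i, (i < n)%nat -> if N i
     then Rabs (h i) + Rabs (mv n (mmul n A M) h i) < 1 - Rabs (qvec n A w i)
     else Rabs (mv n M h i) < Rabs (Ssol n A w i)) ->
  kkt n A (vadd w h) (vadd (Ssol n A w) (mv n M h)).
Proof.
  intros hA Hnd [Hact Hinact] Hsmall i Hi.
  rewrite kkt_residual_shift. change (w i - mv n A (Ssol n A w) i) with (qvec n A w i).
  pose proof (Hsmall i Hi) as Hhi. unfold vadd.
  destruct (Hnd i Hi) as [[Ni Hq]|[Ni Hy]]; rewrite Ni in Hhi.
  - rewrite (subgrad_abs_zero _ _ (Ssol_kkt n A w hA i Hi) Hq).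
    replace (mv n M h i) with 0 by (symmetry; apply rsum_zero; intros; rewrite Hact; auto; ring).
    split; [|rewrite Rplus_0_l, Rabs_R0; ring].
    pose proof (Rabs_triang (qvec n A w i + h i) (- mv n (mmul n A M) h i)).
    pose proof (Rabs_triang (qvec n A w i) (h i)). rewrite Rabs_Ropp in H. unfold Rminus. lra.
  - replace (mv n (mmul n A M) h i) with (h i).
    + replace (qvec n A w i + h i - h i) with (qvec n A w i) by ring.
      apply subgrad_abs_perturb; auto. now apply Ssol_kkt.
    + rewrite <- (rsum_delta n h i Hi). apply rsum_ext. intros j Hj.
      rewrite Hinact by auto. unfold idm.
      destruct (Nat.eqb_spec j i) as [->|]; [rewrite Nat.eqb_refl; ring|].
      destruct (Nat.eqb_spec i j); [lia|ring].
Qed.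

Lemma nondegenerate_has_deriv n A w N M : spd n A ->
  (forall i, (i < n)%nat ->
     (N i = true /\ Rabs (qvec n A w i) < 1) \/ (N i = false /\ Ssol n A w i <> 0)) ->
  active_jacobian n A N M -> has_deriv n (Ssol n A) w M.
Proof.
  intros hA Hnd HM.
  destruct (finite_min n (fun i => if N i then 1 - Rabs (qvec n A w i) else Rabs (Ssol n A w i)))
    as [m [Hm Hmin]].
  { intros i Hi. destruct (Hnd i Hi) as [[-> Hq]|[-> Hy]]; [lra|now apply Rabs_pos_lt]. }
  destruct (finite_max n (fun i => 1 + rsum n (fun j => Rabs (M i j))
                                     + rsum n (fun j => Rabs (mmul n A M i j)))) as [C [HC HCmax]].
  intros e He. exists (m / C). split; [now apply Rdiv_lt_0_compat|]. intros h Hh.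
  assert (HCh : C * norm1 n h < m)
    by (replace m with (C * (m / C)) by (field; lra); now apply Rmult_lt_compat_l).
  assert (Hkkt : kkt n A (vadd w h) (vadd (Ssol n A w) (mv n M h))).
  { apply (active_jacobian_kkt_step n A w N M h hA Hnd HM). intros i Hi.
    pose proof (Hmin i Hi). pose proof (HCmax i Hi).
    pose proof (Rabs_mv_le n M h i). pose proof (Rabs_mv_le n (mmul n A M) h i).
    pose proof (Rabs_coord_le_norm1 n h i Hi). pose proof (norm1_nonneg n h).
    assert (0 <= rsum n (fun j => Rabs (M i j))) by (apply rsum_nonneg; intros; apply Rabs_pos).
    assert (0 <= rsum n (fun j => Rabs (mmul n A M i j)))
      by (apply rsum_nonneg; intros; apply Rabs_pos).
    assert ((1 + rsum n (fun j => Rabs (M i j)) + rsum n (fun j => Rabs (mmul n A M i j)))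
              * norm1 n h <= C * norm1 n h) by (apply Rmult_le_compat_r; auto).
    destruct (N i); nra. }
  replace (norm1 n (vsub (vsub (Ssol n A (vadd w h)) (Ssol n A w)) (mv n M h))) with 0.
  - apply Rmult_le_pos; [lra|apply norm1_nonneg].
  - symmetry. apply rsum_zero. intros i Hi. unfold vsub.
    rewrite (Ssol_unique n A (vadd w h) _ hA Hkkt i Hi). unfold vadd.
    replace (Ssol n A w i + mv n M h i - Ssol n A w i - mv n M h i) with 0 by ring.
    apply Rabs_R0.
Qed.

(** * Realising every B_0 *)

Section Sufficiency.

Variables (n : nat) (A : mat) (u : vec) (B0 : nat -> bool).
Hypothesis hA : spd n A.
Hypothesis B0_biactive : forall i, B0 i = true -> (i < n)%nat /\ biactive n A u i = true.

Let y := Ssol n A u.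
Let q := qvec n A u.
Let N := fun i => orb (strongly_active n A u i) (B0 i).

(* Along [path t], an index of B_0 keeps y_i = 0 while q_i shrinks to (1 - t/2) q_i,
   another biactive index gets y_i = t q_i with q_i unchanged, and all other
   coordinates of y and q stay fixed; so for 0 < t <= 1 no index is biactive. *)
Let dy : vec := fun i => if andb (biactive n A u i) (negb (B0 i)) then q i else 0.
Let dq : vec := fun i => if B0 i then q i / 2 else 0.
Let path (t : R) : vec := fun i => u i + t * (mv n A dy i - dq i).
Let ypath (t : R) : vec := fun i => y i + t * dy i.

Lemma path_residual t i : path t i - mv n A (ypath t) i = q i - t * dq i.
Proof.
  change (ypath t) with (vadd y (fun l => t * dy l)). rewrite mv_plus, mv_scal.
  unfold path, q, qvec, vsub. fold y. ring.
Qed.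

Lemma path_coord t i : 0 < t <= 1 -> (i < n)%nat ->
  subgrad_abs (q i - t * dq i) (ypath t i) /\
  ((N i = true /\ Rabs (q i - t * dq i) < 1) \/ (N i = false /\ ypath t i <> 0)).
Proof.
  intros Ht Hi. destruct (Ssol_kkt n A u hA i Hi) as [Hq1 Hyq].
  change (u i - mv n A (Ssol n A u) i) with (q i) in Hq1, Hyq. fold y in Hyq.
  assert (Hsa : strongly_active n A u i = true <-> Rabs (q i) < 1) by apply strongly_active_iff.
  assert (Hba : biactive n A u i = true <-> y i = 0 /\ Rabs (q i) = 1) by apply biactive_iff.
  unfold subgrad_abs, ypath, dy, dq, N.
  destruct (B0 i) eqn:HB; simpl.
  - destruct (proj1 Hba (proj2 (B0_biactive i HB))) as [-> Hq].
    rewrite andb_false_r, orb_true_r, Rmult_0_r, Rplus_0_r, Rabs_R0.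
    replace (q i - t * (q i / 2)) with ((1 - t / 2) * q i) by field.
    rewrite Rabs_mult, Hq, (Rabs_right (1 - t / 2)) by lra.
    split; [split; [lra|ring]|left; split; auto; lra].
  - rewrite andb_true_r, orb_false_r, Rmult_0_r, Rminus_0_r.
    destruct (biactive n A u i) eqn:Hb.
    + destruct (proj1 Hba eq_refl) as [-> Hq].
      assert (Hss : q i * q i = 1) by (unfold Rabs in Hq; destruct Rcase_abs in Hq; nra).
      destruct (strongly_active n A u i); [pose proof (proj1 Hsa eq_refl); lra|].
      rewrite Rplus_0_l. split; [split|right; split; auto].
      * lra.
      * rewrite Rabs_mult, Hq, Rabs_right by lra.
        replace (t * q i * q i) with (t * (q i * q i)) by ring. rewrite Hss. ring.
      * intros H. apply Rmult_integral in H. destruct H as [H|H]; [lra|].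
        rewrite H, Rabs_R0 in Hq. lra.
    + rewrite Rmult_0_r, Rplus_0_r.
      destruct (strongly_active n A u i) eqn:Hs.
      * split; [split; auto|left; split; auto; now apply Hsa].
      * split; [split; auto|right; split; auto]. intros Hy.
        assert (Rabs (q i) = 1) by (destruct (Rle_lt_or_eq_dec _ _ Hq1) as [Hlt|]; auto;
                                     apply Hsa in Hlt; congruence).
        discriminate (proj2 Hba (conj Hy H)).
Qed.

Lemma path_kkt t : 0 < t <= 1 -> kkt n A (path t) (ypath t).
Proof. intros Ht i Hi. rewrite path_residual. now apply path_coord. Qed.

Lemma path_has_deriv M t : 0 < t <= 1 -> active_jacobian n A N M ->
  has_deriv n (Ssol n A) (path t) M.
Proof.
  intros Ht HM. apply nondegenerate_has_deriv with N; auto. intros i Hi.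
  assert (HS : forall l, (l < n)%nat -> Ssol n A (path t) l = ypath t l)
    by (apply Ssol_unique, path_kkt; auto).
  assert (Hqv : qvec n A (path t) i = q i - t * dq i).
  { rewrite <- path_residual. unfold qvec, vsub. f_equal. now apply mv_ext. }
  rewrite Hqv, HS by auto. now apply path_coord.
Qed.

Lemma path_cv : vseq_cv n (fun k => path (/ (INR k + 1))) u.
Proof.
  set (v := fun i => mv n A dy i - dq i).
  assert (Hnorm : forall t, 0 <= t -> norm1 n (vsub (path t) u) = t * norm1 n v).
  { intros t Ht. unfold norm1. rewrite <- rsum_scal_l. apply rsum_ext. intros i _.
    unfold vsub, path. fold (v i). replace (u i + t * v i - u i) with (t * v i) by ring.
    now rewrite Rabs_mult, (Rabs_right t) by lra. }
  intros e He. destruct (INR_archimed e (norm1 n v)) as [K HK]; [lra|].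
  exists K. intros k Hk. pose proof (pos_INR k) as Hk0.
  assert (INR K <= INR k) by (apply le_INR; lia).
  rewrite Hnorm by (apply Rlt_le, Rinv_0_lt_compat; lra).
  apply Rmult_lt_reg_l with (INR k + 1); [lra|].
  rewrite <- Rmult_assoc, Rinv_r, Rmult_1_l by lra. nra.
Qed.

Lemma active_jacobian_bouligand M : active_jacobian n A N M -> bouligand n A u M.
Proof.
  intros HM. exists (fun k => path (/ (INR k + 1))), (fun _ => M).
  split; [apply path_cv|split].
  - intros k. apply path_has_deriv; auto. pose proof (pos_INR k). split.
    + apply Rinv_0_lt_compat. lra.
    + rewrite <- Rinv_1. apply Rinv_le_contravar; lra.
  - intros i j _ _. apply Un_cv_const.
Qed.

End Sufficiency.

Theorem theorem4p1 (n : nat) (A : mat) (u : vec) (hA : spd n A) :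
  forall M : mat,
    bouligand n A u M <->
    exists B0 : nat -> bool,
      (forall i, B0 i = true -> (i < n)%nat /\ biactive n A u i = true) /\
      let N := fun i => orb (strongly_active n A u i) (B0 i) in
      meq n M (mmul n (minv n (A_of A N)) (chi N)).
Proof.
  intros M. split.
  - intros HM. destruct (bouligand_active_jacobian n A u M hA HM) as [B0 [HB0 Hjac]].
    exists B0. split; auto. now apply meq_minv_chi_iff.
  - intros [B0 [HB0 HM]]. apply (active_jacobian_bouligand n A u B0 hA HB0).
    now apply meq_minv_chi_iff in HM.
Qed.
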